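(* Let $R$ be an exchange ring and $A\in GL_n(R)$ with $n\ge 2$. Then $A$ can be transformed by a finite sequence of elementary row and column operations to a matrix whose $1,1$ entry $d$ is a (von Neumann) regular element with $dR=(1-p)R$ and $Rd=R(1-q)$ for some idempotents $p,q\in R$ such that $RpR=RqR=R$.
   Context: All rings are unital. A ring $R$ is an exchange ring if for every $a\in R$ there is an idempotent $e\in aR$ with $1-e\in(1-a)R$ (equivalently, $R_R$ has the finite exchange property). An element $x\in R$ is regular if $xyx=x$ for some $y\in R$. An elementary row (resp. column) operation adds a left (resp. right) multiple by an element of $R$ of one row (resp. column) to a different row (resp. column). *)

From HB Require Import structures.
From mathcomp Require Import all_boot all_order all_algebra.
From Stdlib Require Import Relations.
Set Implicit Arguments. Unset Strict Implicit. Unset Printing Implicit Defensive.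
Import GRing.Theory.
Local Open Scope ring_scope.

Definition regular_elt (R : pzRingType) (x : R) : Prop :=
  exists y : R, x * y * x = x.

Definition exchange_ring (R : pzRingType) : Prop :=
  forall a : R, exists e : R,
    e * e = e /\ (exists r : R, e = a * r) /\ (exists s : R, 1 - e = (1 - a) * s).

Definition same_right_ideal (R : pzRingType) (x y : R) : Prop :=
  forall z : R, (exists r : R, z = x * r) <-> (exists s : R, z = y * s).

Definition same_left_ideal (R : pzRingType) (x y : R) : Prop :=
  forall z : R, (exists r : R, z = r * x) <-> (exists s : R, z = s * y).

(* RpR = R: the two-sided ideal generated by p (finite sums of a p b) is R,
   i.e. it contains 1 *)
Definition full_ideal (R : pzRingType) (p : R) : Prop :=
  exists (k : nat) (a b : 'I_k -> R), \sum_(i < k) a i * p * b i = 1.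

Definition invertible_mx (R : pzRingType) (n : nat) (A : 'M[R]_n) : Prop :=
  exists B : 'M[R]_n, A *m B = 1%:M /\ B *m A = 1%:M.

Definition row_op (R : pzRingType) (n : nat) (i j : 'I_n) (r : R) (A : 'M[R]_n)
  : 'M[R]_n :=
  \matrix_(k, l) (if k == i then A i l + r * A j l else A k l).

Definition col_op (R : pzRingType) (n : nat) (i j : 'I_n) (r : R) (A : 'M[R]_n)
  : 'M[R]_n :=
  \matrix_(k, l) (if l == i then A k i + A k j * r else A k l).

Definition elem_step (R : pzRingType) (n : nat) (A B : 'M[R]_n) : Prop :=
  exists (i j : 'I_n) (r : R), i != j /\ (B = row_op i j r A \/ B = col_op i j r A).

Definition elem_reach (R : pzRingType) (n : nat) : relation 'M[R]_n :=
  clos_refl_trans _ (@elem_step R n).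

From HB Require Import structures.
From mathcomp Require Import all_boot all_order all_algebra.
From Stdlib Require Import Relations.
Set Implicit Arguments. Unset Strict Implicit. Unset Printing Implicit Defensive.
Import GRing.Theory.
Local Open Scope ring_scope.

(* Row i of an invertible A is right unimodular, sum_j A_ij X_ji = 1, so adding
   multiples of the other columns to column i can change the corner a = A_ii by
   any element of (1 - a X_ii)R.  The exchange property applied to a X_ii yields an
   idempotent e = a w with 1 - e in (1 - a X_ii)R, so the corner can be replaced by
   e a = a w a, which is regular.  A variant of this column trick, and its
   transpose, pushes a regular corner d with dR = eR into R(1 - e)R and then into
   R(1 - f)R with f = w d, a further exchange step restoring regularity each time.
   Finally, if d w d = d, e d = d and d lies in R(1 - e)R, then g = d w satisfies
   (1 - e)(1 - g) = 1 - e, hence g lies in R(1 - g)R and R(1 - g)R = R; dually for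
   w d and f. *)

Definition two_sided_multiple (R : pzRingType) (d x : R) : Prop :=
  exists a b : R, d = a * x * b.

Section RingLemmas.
Variable R : pzRingType.
Implicit Types a b d e f g p w x y : R.

Lemma two_sided_multiple_mull a d x :
  two_sided_multiple d x -> two_sided_multiple (a * d) x.
Proof. by case=> u [v ->]; exists (a * u), v; rewrite !mulrA. Qed.

Lemma two_sided_multiple_mulr d b x :
  two_sided_multiple d x -> two_sided_multiple (d * b) x.
Proof. by case=> u [v ->]; exists u, (v * b); rewrite !mulrA. Qed.

Lemma idem_subr x : x * x = x -> (1 - x) * (1 - x) = 1 - x.
Proof. by move=> xx; rewrite mulrBl mul1r mulrBr mulr1 xx subrr subr0. Qed.

Lemma full_ideal_sandwich p x y : x * p * y = 1 - p -> full_ideal p.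
Proof.
move=> xpy; exists 2%N, (fun i => [:: 1; x]`_i), (fun i => [:: 1; y]`_i).
by rewrite big_ord_recl big_ord1 /= mul1r mulr1 xpy subrKC.
Qed.

Lemma full_ideal_subr_l e g :
  e * g = g -> two_sided_multiple g (1 - e) -> full_ideal (1 - g).
Proof.
move=> eg [a [b gE]]; apply: (@full_ideal_sandwich _ (a * (1 - e)) b).
have compl : (1 - e) * (1 - g) = 1 - e.
  by rewrite mulrBl mul1r mulrBr mulr1 eg opprB addrA subrK.
by rewrite subKr -(mulrA a) compl.
Qed.

Lemma full_ideal_subr_r f g :
  g * f = g -> two_sided_multiple g (1 - f) -> full_ideal (1 - g).
Proof.
move=> gf [a [b gE]]; apply: (@full_ideal_sandwich _ a ((1 - f) * b)).
have compl : (1 - g) * (1 - f) = 1 - f.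
  by rewrite mulrBr mulr1 mulrBl mul1r gf opprB addrA subrK.
by rewrite subKr mulrA -(mulrA a) compl.
Qed.

Lemma same_right_ideal_regular d w : d * w * d = d -> same_right_ideal d (d * w).
Proof.
move=> reg z; split=> [[r ->]|[s ->]]; first by exists (d * r); rewrite mulrA reg.
by exists (w * s); rewrite mulrA.
Qed.

Lemma same_left_ideal_regular d w : d * w * d = d -> same_left_ideal d (w * d).
Proof.
move=> reg z; split=> [[r ->]|[s ->]]; first by exists (r * d); rewrite -[in LHS]reg !mulrA.
by exists (s * w); rewrite mulrA.
Qed.

Lemma regular_full_compl d w e f :
  d * w * d = d -> e * d = d -> d * f = d ->
  two_sided_multiple d (1 - e) -> two_sided_multiple d (1 - f) ->
  regular_elt d /\
  exists p q : R,
    p * p = p /\ q * q = q /\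
    same_right_ideal d (1 - p) /\ same_left_ideal d (1 - q) /\
    full_ideal p /\ full_ideal q.
Proof.
move=> reg ed df tsm_e tsm_f; split; first by exists w.
exists (1 - d * w), (1 - w * d); rewrite !subKr; split.
  by apply: idem_subr; rewrite mulrA reg.
split; first by apply: idem_subr; rewrite -!mulrA [d * (w * d)]mulrA reg.
split; first exact: same_right_ideal_regular.
split; first exact: same_left_ideal_regular.
split.
  apply: (full_ideal_subr_l (e := e)); first by rewrite mulrA ed.
  exact: two_sided_multiple_mulr.
apply: (full_ideal_subr_r (f := f)); first by rewrite -mulrA df.
exact: two_sided_multiple_mull.
Qed.

End RingLemmas.

Section ElementaryOperations.
Variables (R : pzRingType) (n : nat).
Implicit Types A B X : 'M[R]_n.

Lemma sum_id_mxl (i : 'I_n) (F : 'I_n -> R) :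
  \sum_k (1%:M : 'M[R]_n) i k * F k = F i.
Proof.
rewrite (bigD1 i) //= mxE eqxx mul1r big1 ?addr0 // => k /negPf.
by rewrite mxE eq_sym => ->; rewrite mul0r.
Qed.

Lemma sum_id_mxr (i : 'I_n) (F : 'I_n -> R) :
  \sum_k F k * (1%:M : 'M[R]_n) k i = F i.
Proof.
rewrite (bigD1 i) //= mxE eqxx mulr1 big1 ?addr0 // => k /negPf.
by rewrite mxE => ->; rewrite mulr0.
Qed.

Lemma row_op_mul (i j : 'I_n) r A : row_op i j r A = row_op i j r 1%:M *m A.
Proof.
apply/matrixP=> k l; rewrite !mxE; under eq_bigr do rewrite mxE.
case: eqP => _; last by rewrite sum_id_mxl.
under eq_bigr do rewrite mulrDl -mulrA.
by rewrite big_split /= -mulr_sumr !sum_id_mxl.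
Qed.

Lemma col_op_mul (i j : 'I_n) r A : col_op i j r A = A *m col_op i j r 1%:M.
Proof.
apply/matrixP=> k l; rewrite !mxE; under eq_bigr do rewrite mxE.
case: eqP => _; last by rewrite sum_id_mxr.
under eq_bigr do rewrite mulrDr mulrA.
by rewrite big_split /= -mulr_suml !sum_id_mxr.
Qed.

Lemma row_opK (i j : 'I_n) r A : i != j -> row_op i j (- r) (row_op i j r A) = A.
Proof.
move=> ij; apply/matrixP=> k l; rewrite !mxE.
by case: eqP => [->|//]; rewrite eqxx eq_sym (negPf ij) mulNr addrK.
Qed.

Lemma col_opK (i j : 'I_n) r A : i != j -> col_op i j (- r) (col_op i j r A) = A.
Proof.
move=> ij; apply/matrixP=> k l; rewrite !mxE.
by case: eqP => [->|//]; rewrite eqxx eq_sym (negPf ij) mulrN addrK.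
Qed.

Lemma elem_step_invertible A B : elem_step A B -> invertible_mx A -> invertible_mx B.
Proof.
move=> [i [j [r [ij [->|->]]]]] [X [AX XA]].
  exists (X *m row_op i j (- r) 1%:M); rewrite row_op_mul; split.
    by rewrite mulmxA -(mulmxA _ A) AX mulmx1 -row_op_mul -{1}(opprK r) row_opK.
  by rewrite mulmxA -(mulmxA X) -row_op_mul row_opK // mulmx1.
exists (col_op i j (- r) 1%:M *m X); rewrite col_op_mul; split.
  by rewrite mulmxA -(mulmxA A) -col_op_mul col_opK // mulmx1.
by rewrite -mulmxA (mulmxA X) XA mul1mx -col_op_mul -{1}(opprK r) col_opK.
Qed.

Lemma elem_reach_invertible A B : elem_reach A B -> invertible_mx A -> invertible_mx B.
Proof. by elim=> // [? ? /elem_step_invertible|? ? ? _ IH1 _ IH2 /IH1 /IH2]. Qed.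

Lemma elem_reach_col_op (i j : 'I_n) r A : i != j -> elem_reach A (col_op i j r A).
Proof. by move=> ij; apply: rt_step; exists i, j, r; split=> //; right. Qed.

Lemma elem_reach_col_combination A (i : 'I_n) (t : 'I_n -> R) :
  elem_reach A (\matrix_(k, l) (if l == i then A k i + \sum_(j | j != i) A k j * t j
                                else A k l)).
Proof.
pose M (s : seq 'I_n) : 'M[R]_n :=
  \matrix_(k, l) (if l == i then A k i + \sum_(j <- s) A k j * t j else A k l).
have reachM s : all (fun j => j != i) s -> elem_reach A (M s).
  elim: s => [_|j s IH /andP [ji /IH reach_s]].
    suff -> : M [::] = A by apply: rt_refl.
    by apply/matrixP => k l; rewrite mxE big_nil addr0; case: eqP => [->|].
  suff -> : M (j :: s) = col_op i j (t j) (M s).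
    by apply: rt_trans reach_s (elem_reach_col_op _ _ _); rewrite eq_sym.
  apply/matrixP => k l; rewrite !mxE; case: eqP => // _.
  by rewrite eqxx (negPf ji) big_cons addrCA addrC.
have := reachM [seq j <- index_enum 'I_n | j != i] (filter_all _ _).
by congr elem_reach; apply/matrixP => k l; rewrite !mxE big_filter.
Qed.

Lemma sum_col_op A (i j k : 'I_n) r (y : 'I_n -> R) : j != i ->
  \sum_(l | l != i) col_op j i r A k l * y l =
  \sum_(l | l != i) A k l * y l + A k i * r * y j.
Proof.
move=> ji; rewrite (bigD1 j) // [in RHS](bigD1 j) //= !mxE eqxx mulrDl.
rewrite addrAC; congr (_ + _ + _); apply: eq_bigr => l /andP [_ /negPf lj].
by rewrite mxE lj.
Qed.

Lemma sum_row_tail A X (i : 'I_n) : A *m X = 1%:M ->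
  \sum_(j | j != i) A i j * X j i = 1 - A i i * X i i.
Proof.
move/matrixP/(_ i i); rewrite !mxE eqxx mulr1n (bigD1 i) //= => <-.
by rewrite addrAC subrr add0r.
Qed.

End ElementaryOperations.

Section Transpose.
Variables (R : pzRingType) (n : nat).
Implicit Types A B : 'M[R]_n.

Lemma row_op_tr (i j : 'I_n) r A :
  (row_op i j r A)^T = col_op i j (r : R^c) (A^T : 'M[R^c]_n).
Proof. by apply/matrixP => k l; rewrite !mxE. Qed.

Lemma col_op_tr (i j : 'I_n) r A :
  (col_op i j r A)^T = row_op i j (r : R^c) (A^T : 'M[R^c]_n).
Proof. by apply/matrixP => k l; rewrite !mxE. Qed.

Lemma elem_reach_tr A B :
  elem_reach A B -> elem_reach (A^T : 'M[R^c]_n) (B^T : 'M[R^c]_n).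
Proof.
elim=> [{}A {}B [i [j [r [ij [->|->]]]]]|{}A|A1 A2 A3 _ IH12 _ IH23].
- by apply: rt_step; exists i, j, r; split=> //; right; rewrite row_op_tr.
- by apply: rt_step; exists i, j, r; split=> //; left; rewrite col_op_tr.
- exact: rt_refl.
- exact: rt_trans IH12 IH23.
Qed.

Lemma invertible_mx_tr A : invertible_mx A -> invertible_mx (A^T : 'M[R^c]_n).
Proof.
by case=> X [AX XA]; exists (X^T : 'M[R^c]_n); rewrite -!trmx_mul_rev XA AX trmx1.
Qed.

End Transpose.

Section Corner.
Variables (R : pzRingType) (n : nat).
Implicit Types A X : 'M[R]_n.

Lemma reach_corner_shift A X (i : 'I_n) t : A *m X = 1%:M ->
  exists B, elem_reach A B /\ B i i = A i i + (1 - A i i * X i i) * t.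
Proof.
move=> AX; eexists; split.
  exact: (elem_reach_col_combination A i (fun j => X j i * t)).
by rewrite mxE eqxx; under eq_bigr do rewrite mulrA; rewrite -mulr_suml sum_row_tail.
Qed.

Lemma exchange_reach_corner A (i : 'I_n) : exchange_ring R -> invertible_mx A ->
  exists B w, elem_reach A B /\ B i i = A i i * w * A i i /\ B i i * w * B i i = B i i.
Proof.
move=> exR [X [AX _]]; set a := A i i.
have [e [ee [[r eE] [s eE']]]] := exR (a * X i i).
have [B [reachB BE]] := reach_corner_shift i (- (s * a)) AX.
have {}BE : B i i = e * a.
  by rewrite BE mulrN mulrA -eE' mulrBl mul1r opprB addrC subrK.
have wE : a * (X i i * r) = e by rewrite mulrA -eE.
exists B, (X i i * r); rewrite BE wE; split=> //; split=> //.
by rewrite -(mulrA e a) wE ee mulrA ee.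
Qed.

Lemma reach_corner_col A (i j : 'I_n) w f :
  j != i -> invertible_mx A -> A i i * f = A i i ->
  exists B N, elem_reach A B /\ B i i = A i i * N * (1 - A i i * w) * A i j * f.
Proof.
move=> ji [X [AX _]] xf; set x := A i i in xf *; set b := A i j.
pose A1 := col_op j i (- (w * b + 1)) A.
pose A2 := col_op i j f A1.
pose u := (1 - x * w) * b * f.
have A2ii : A2 i i = u.
  rewrite /A2 /A1 !mxE eqxx eq_sym (negPf ji) -/x -/b eqxx /u !mulrBl !mul1r.
  by rewrite mulrN mulrDr mulr1 mulrBl mulrDl xf !mulrA opprD [- _ - x]addrC addrCA addNKr.
have A2_tail : \sum_(k | k != i) A2 i k * X k i = 1 - x * X i i - x * (w * b + 1) * X j i.
  rewrite (eq_bigr (fun k => A1 i k * X k i)) => [|k /negPf ki]; last by rewrite mxE ki.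
  by rewrite sum_col_op // sum_row_tail // mulrN mulNr.
(* The coefficients come from the inverse X of A, not of A2: row i of A2 differs
   from that of A only at j, by an element of x R, so 1 - sum_k A2_ik X_ki lies in
   x R. *)
exists (\matrix_(k, l) (if l == i then A2 k i + \sum_(k' | k' != i) A2 k k' * - (X k' i * u)
                       else A2 k l)), (X i i + (w * b + 1) * X j i).
split.
  apply: rt_trans (elem_reach_col_combination A2 i _).
  by apply: rt_trans (elem_reach_col_op _ _ _) (elem_reach_col_op _ _ _); rewrite // eq_sym.
rewrite mxE eqxx A2ii; under eq_bigr do rewrite mulrN mulrA.
rewrite sumrN -mulr_suml A2_tail.
have -> : x * (X i i + (w * b + 1) * X j i) * (1 - x * w) * b * f =
          x * (X i i + (w * b + 1) * X j i) * u by rewrite /u !mulrA.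
by rewrite !mulrBl mul1r !opprB addrCA subrKC addrC -mulrDl -mulrA -mulrDr.
Qed.

End Corner.

Lemma reach_corner_row (R : pzRingType) n (A : 'M[R]_n) (i j : 'I_n) w f :
  j != i -> invertible_mx A -> f * A i i = A i i ->
  exists B N, elem_reach A B /\ B i i = f * A j i * (1 - w * A i i) * N * A i i.
Proof.
move=> ji /invertible_mx_tr Ainv fx.
have fx' : (A^T : 'M[R^c]_n) i i * (f : R^c) = A^T i i by rewrite mxE.
have [B [N [reachB BE]]] := reach_corner_col (w : R^c) ji Ainv fx'.
exists B^T, N; split; first by have := elem_reach_tr reachB; rewrite trmxK.
rewrite mxE BE !mxE.
change (f * (A j i * ((1 - w * A i i) * ((N : R) * A i i))) =
        f * A j i * (1 - w * A i i) * (N : R) * A i i).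
by rewrite !mulrA.
Qed.

Section Stages.
Variables (R : pzRingType) (n : nat).
Implicit Type A : 'M[R]_n.

Lemma exchange_reach_corner_left A (i j : 'I_n) :
  j != i -> exchange_ring R -> invertible_mx A ->
  exists B e w, elem_reach A B /\ e * e = e /\
    B i i * w * B i i = B i i /\ e * B i i = B i i /\
    two_sided_multiple (B i i) (1 - e).
Proof.
move=> ji exR Ainv.
have [A1 [w1 [reach1 [_ reg1]]]] := exchange_reach_corner i exR Ainv.
have Ainv1 := elem_reach_invertible reach1 Ainv.
have [A2 [N [reach2 d2E]]] := reach_corner_col w1 ji Ainv1 (mulr1 _).
have [A3 [w3 [reach3 [d3E reg3]]]] :=
  exchange_reach_corner i exR (elem_reach_invertible reach2 Ainv1).
exists A3, (A1 i i * w1), w3; split.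
  by apply: rt_trans reach1 _; apply: rt_trans reach2 reach3.
have e_d2 : A1 i i * w1 * A2 i i = A2 i i by rewrite d2E !mulrA reg1.
split; first by rewrite mulrA reg1.
split=> //; split; first by rewrite d3E !mulrA e_d2.
rewrite d3E; apply: two_sided_multiple_mull.
by exists (A1 i i * N), (A1 i j * 1); rewrite d2E !mulrA.
Qed.

Lemma exchange_reach_corner_right A (i j : 'I_n) e w :
  j != i -> exchange_ring R -> invertible_mx A ->
  e * e = e -> A i i * w * A i i = A i i -> e * A i i = A i i ->
  exists B w' f, elem_reach A B /\
    B i i * w' * B i i = B i i /\ e * B i i = B i i /\ B i i * f = B i i /\
    two_sided_multiple (B i i) (1 - f) /\ exists c, B i i = c * A i i.
Proof.
move=> ji exR Ainv ee reg ed.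
have [A4 [N [reach4 d4E]]] := reach_corner_row w ji Ainv ed.
have [A5 [w5 [reach5 [d5E reg5]]]] :=
  exchange_reach_corner i exR (elem_reach_invertible reach4 Ainv).
exists A5, w5, (w * A i i); split; first exact: rt_trans reach4 reach5.
split=> //; split; first by rewrite d5E d4E !mulrA ee.
split; first by rewrite d5E d4E -!mulrA [A i i * (w * A i i)]mulrA reg.
split.
  rewrite d5E; apply: two_sided_multiple_mull.
  by exists (e * A j i), (N * A i i); rewrite d4E !mulrA.
by exists (A4 i i * w5 * (e * A j i * (1 - w * A i i) * N)); rewrite d5E {2}d4E !mulrA.
Qed.

End Stages.

Theorem lemma2p7 (R : pzRingType) (m : nat) (A : 'M[R]_(m.+2)) :
  exchange_ring R -> invertible_mx A ->
  exists B : 'M[R]_(m.+2),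
    elem_reach A B /\
    let d := B ord0 ord0 in
    regular_elt d /\
    exists p q : R,
      p * p = p /\ q * q = q /\
      same_right_ideal d (1 - p) /\ same_left_ideal d (1 - q) /\
      full_ideal p /\ full_ideal q.
Proof.
move=> exR Ainv; have ji : lift ord0 ord0 != ord0 :> 'I_(m.+2) by rewrite eq_sym neq_lift.
have [A1 [e [w [reach1 [ee [reg1 [ed1 de1]]]]]]] := exchange_reach_corner_left ji exR Ainv.
have [B [w' [f [reach2 [regB [eB [Bf [dfB [c BE]]]]]]]]] :=
  exchange_reach_corner_right ji exR (elem_reach_invertible reach1 Ainv) ee reg1 ed1.
exists B; split; first exact: rt_trans reach1 reach2.
apply: (regular_full_compl regB eB Bf) => //.
by rewrite BE; apply: two_sided_multiple_mull.
Qed.
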